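(* Let $X,Y$ be real Hilbert spaces and $a:X\times Y\to\mathbb{R}\cup\{+\infty\}$ such that for every $y\in Y$ the function $a(\cdot,y)$ is proper and $\Phi_{lsc}$-convex on $X$, and for every $x\in X$ the function $a(x,\cdot)$ is concave on $Y$. If $\sup_{y\in Y}\inf_{x\in X}a(x,y)=\inf_{x\in X}\sup_{y\in Y}a(x,y)$, then for every $\alpha<\inf_{x\in X}\sup_{y\in Y}a(x,y)$ there exist $y_1,y_2\in Y$ such that for every $\varepsilon>0$ there exist $x_1\in\mathrm{dom}\,a(\cdot,y_1)$ and $x_2\in\mathrm{dom}\,a(\cdot,y_2)$ for which $a(\cdot,y_1)$ and $a(\cdot,y_2)$ satisfy $ZS(\varepsilon,x_1,x_2)$.
   Context: $\Phi_{lsc}$ is the class of functions $\varphi(x)=-a\|x\|^2+\langle v,x\rangle+c$ ($a\ge0$, $v\in X^*$, $c\in\mathbb{R}$); $\mathrm{supp}(f)=\{\varphi\in\Phi_{lsc}:\varphi\le f\}$; $f$ is $\Phi_{lsc}$-convex if $f=\sup\mathrm{supp}(f)$ pointwise; proper means $\mathrm{supp}(f)\ne\emptyset$ and $\mathrm{dom}(f)\ne\emptyset$. For $\varepsilon\ge0$, $\partial^\varepsilon_{lsc}f(\bar x)$ is the set of $(a,v)\in\mathbb{R}_+\times X^*$ with $f(x)-f(\bar x)\ge\langle v,x-\bar x\rangle-a\|x\|^2+a\|\bar x\|^2-\varepsilon$ for all $x\in X$. Functions $f,g$ satisfy $ZS(\varepsilon,x_1,x_2)$ if $0=(0,0)\in\mathrm{co}(\partial^\varepsilon_{lsc}f(x_1)\cup\partial^\varepsilon_{lsc}g(x_2))$,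 convex hull in $\mathbb{R}\times X^*$. *)

From Stdlib Require Import Reals Lra List.
Import ListNotations.
Open Scope R_scope.

Record HilbertSpace := {
  hcar :> Type;
  hzero : hcar;
  hadd : hcar -> hcar -> hcar;
  hopp : hcar -> hcar;
  hscal : R -> hcar -> hcar;
  hinner : hcar -> hcar -> R;
  hadd_assoc : forall x y z, hadd x (hadd y z) = hadd (hadd x y) z;
  hadd_comm : forall x y, hadd x y = hadd y x;
  hadd_zero : forall x, hadd x hzero = x;
  hadd_opp : forall x, hadd x (hopp x) = hzero;
  hscal_one : forall x, hscal 1 x = x;
  hscal_assoc : forall a b x, hscal a (hscal b x) = hscal (a * b) x;
  hscal_distr_l : forall a x y, hscal a (hadd x y) = hadd (hscal a x) (hscal a y);
  hscal_distr_r : forall a b x, hscal (a + b) x = hadd (hscal a x) (hscal b x);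
  hinner_sym : forall x y, hinner x y = hinner y x;
  hinner_add_l : forall x y z, hinner (hadd x y) z = hinner x z + hinner y z;
  hinner_scal_l : forall a x y, hinner (hscal a x) y = a * hinner x y;
  hinner_pos : forall x, 0 <= hinner x x;
  hinner_def : forall x, hinner x x = 0 -> x = hzero;
  hcomplete : forall u : nat -> hcar,
    (forall eps, 0 < eps -> exists N, forall m n, (N <= m)%nat -> (N <= n)%nat ->
        sqrt (hinner (hadd (u m) (hopp (u n))) (hadd (u m) (hopp (u n)))) < eps) ->
    exists l, forall eps, 0 < eps -> exists N, forall n, (N <= n)%nat ->
        sqrt (hinner (hadd (u n) (hopp l)) (hadd (u n) (hopp l))) < eps
}.

Arguments hzero {h}.
Arguments hadd {h}.
Arguments hopp {h}.
Arguments hscal {h}.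
Arguments hinner {h}.

Definition hsub {X : HilbertSpace} (x y : X) : X := hadd x (hopp y).
Definition hnorm {X : HilbertSpace} (x : X) : R := sqrt (hinner x x).

Definition in_dual {X : HilbertSpace} (v : X -> R) : Prop :=
  (forall x y, v (hadd x y) = v x + v y) /\
  (forall a x, v (hscal a x) = a * v x) /\
  (exists M, forall x, Rabs (v x) <= M * hnorm x).

Inductive Rbar := Fin (r : R) | PInf | MInf.

Definition Rbar_le (x y : Rbar) : Prop :=
  match x, y with
  | MInf, _ => True
  | _, PInf => True
  | Fin a, Fin b => a <= b
  | _, _ => False
  end.

Definition Rbar_lt (x y : Rbar) : Prop := Rbar_le x y /\ x <> y.

Definition is_sup (S : Rbar -> Prop) (s : Rbar) : Prop :=
  (forall x, S x -> Rbar_le x s) /\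
  (forall u, (forall x, S x -> Rbar_le x u) -> Rbar_le s u).

Definition is_inf (S : Rbar -> Prop) (s : Rbar) : Prop :=
  (forall x, S x -> Rbar_le s x) /\
  (forall u, (forall x, S x -> Rbar_le u x) -> Rbar_le u s).

Definition phi_lsc {X : HilbertSpace} (a : R) (v : X -> R) (c : R) (x : X) : R :=
  - a * (hnorm x) ^ 2 + v x + c.

Definition in_Phi_lsc {X : HilbertSpace} (phi : X -> R) : Prop :=
  exists a v c, 0 <= a /\ in_dual v /\ forall x, phi x = phi_lsc a v c x.

Definition in_supp {X : HilbertSpace} (f : X -> Rbar) (phi : X -> R) : Prop :=
  in_Phi_lsc phi /\ forall x, Rbar_le (Fin (phi x)) (f x).

Definition Phi_lsc_convex {X : HilbertSpace} (f : X -> Rbar) : Prop :=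
  forall x, is_sup (fun t => exists phi, in_supp f phi /\ t = Fin (phi x)) (f x).

Definition in_dom {X : HilbertSpace} (f : X -> Rbar) (x : X) : Prop :=
  exists r, f x = Fin r.

Definition proper {X : HilbertSpace} (f : X -> Rbar) : Prop :=
  (exists phi, in_supp f phi) /\ (exists x, in_dom f x).

(** Concavity of g : Y -> R u {+oo}: its hypograph is convex. *)
Definition concave {Y : HilbertSpace} (g : Y -> Rbar) : Prop :=
  forall (y1 y2 : Y) (t1 t2 lam : R), 0 <= lam <= 1 ->
    Rbar_le (Fin t1) (g y1) -> Rbar_le (Fin t2) (g y2) ->
    Rbar_le (Fin (lam * t1 + (1 - lam) * t2))
            (g (hadd (hscal lam y1) (hscal (1 - lam) y2))).

(** epsilon-subdifferential: (a,v) in R_+ x X^* with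
    f(x) - f(xb) >= <v,x-xb> - a||x||^2 + a||xb||^2 - eps  for all x.
    (Defined only at points xb of the domain; empty otherwise.) *)
Definition in_eps_subdiff {X : HilbertSpace} (eps : R) (f : X -> Rbar) (xb : X)
    (p : R * (X -> R)) : Prop :=
  let (a, v) := p in
  0 <= a /\ in_dual v /\
  exists fxb, f xb = Fin fxb /\
    forall x, Rbar_le
      (Fin (fxb + v (hsub x xb) - a * (hnorm x) ^ 2 + a * (hnorm xb) ^ 2 - eps))
      (f x).

(** Convex hull in R x X^*: finite convex combinations. [in_co S p] *)
Definition in_co {X : HilbertSpace} (S : R * (X -> R) -> Prop) (p : R * (X -> R)) : Prop :=
  exists l : list (R * (R * (X -> R))),
    (forall w q, In (w, q) l -> 0 <= w /\ S q) /\
    fold_right (fun wq acc => fst wq + acc) 0 l = 1 /\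
    fold_right (fun wq acc => fst wq * fst (snd wq) + acc) 0 l = fst p /\
    (forall x, fold_right (fun wq acc => fst wq * snd (snd wq) x + acc) 0 l = snd p x).

Definition ZS {X : HilbertSpace} (f g : X -> Rbar) (eps : R) (x1 x2 : X) : Prop :=
  in_co (fun p => in_eps_subdiff eps f x1 p \/ in_eps_subdiff eps g x2 p)
        (0, fun _ => 0).

(* Since sup_y inf_x a(x,y) equals inf_x sup_y a(x,y) > alpha, some y has
   inf_x a(x,y) > alpha, and this infimum is finite because a(.,y) is proper.
   An eps-minimiser x1 of a(.,y) then has (0,0) in its eps-subdifferential, so
   ZS(eps,x1,x1) holds for the pair y1 = y2 = y. *)
From Stdlib Require Import Reals Lra List Classical.
Import ListNotations.
Open Scope R_scope.

Lemma Rbar_le_antisym (x y : Rbar) : Rbar_le x y -> Rbar_le y x -> x = y.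
Proof.
  destruct x, y; simpl; intros; try tauto; try reflexivity.
  f_equal; lra.
Qed.

Lemma is_inf_unique (S : Rbar -> Prop) (s t : Rbar) :
  is_inf S s -> is_inf S t -> s = t.
Proof.
  intros [Hs_lb Hs_glb] [Ht_lb Ht_glb].
  apply Rbar_le_antisym; [apply Ht_glb | apply Hs_glb]; assumption.
Qed.

Lemma is_sup_gt_elem (S : Rbar -> Prop) (s : Rbar) (alpha : R) :
  is_sup S s -> Rbar_lt (Fin alpha) s -> exists t, S t /\ ~ Rbar_le t (Fin alpha).
Proof.
  intros [_ Hs_lub] [Hle Hne].
  apply NNPP; intro Hnone.
  apply Hne, Rbar_le_antisym; [exact Hle |].
  apply Hs_lub; intros t Ht.
  apply NNPP; intro Hgt; eauto.
Qed.

Section Infimum.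

Variable X : Type.
Variable f : X -> Rbar.
Hypothesis f_ninf : forall x, f x <> MInf.

Let range := fun u => exists x, u = f x.

Lemma is_inf_fin (t : Rbar) (x0 : X) (r0 alpha : R) :
  is_inf range t -> f x0 = Fin r0 -> ~ Rbar_le t (Fin alpha) ->
  exists r, t = Fin r.
Proof.
  intros [Ht_lb _] Hx0 Hgt.
  destruct t as [r | |]; [eauto | | now exfalso; apply Hgt].
  exfalso; specialize (Ht_lb (f x0) (ex_intro _ x0 eq_refl)).
  now rewrite Hx0 in Ht_lb.
Qed.

Lemma is_inf_approx (r eps : R) :
  is_inf range (Fin r) -> 0 < eps ->
  exists x r1, f x = Fin r1 /\ r1 < r + eps.
Proof.
  intros [_ Hglb] Heps.
  apply NNPP; intro Hnone.
  assert (Hlb : Rbar_le (Fin (r + eps)) (Fin r)).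
  { apply Hglb; intros u [x ->].
    destruct (f x) as [r1 | |] eqn:Efx; simpl; auto.
    - destruct (Rle_dec (r + eps) r1); auto.
      exfalso; apply Hnone; exists x, r1; split; auto; lra.
    - exact (f_ninf x Efx). }
  simpl in Hlb; lra.
Qed.

End Infimum.

Lemma in_dual_zero (X : HilbertSpace) : in_dual (fun _ : X => 0).
Proof.
  split; [intros; lra |]. split; [intros; lra |].
  exists 0; intros; rewrite Rabs_R0; lra.
Qed.

Lemma zero_in_eps_subdiff (X : HilbertSpace) (f : X -> Rbar) (x1 : X)
    (r r1 eps : R) :
  (forall x, Rbar_le (Fin r) (f x)) -> f x1 = Fin r1 -> r1 <= r + eps ->
  in_eps_subdiff eps f x1 (0, fun _ => 0).
Proof.
  intros Hlb Hx1 Happrox; simpl.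
  split; [lra |]. split; [apply in_dual_zero |].
  exists r1; split; [exact Hx1 |]; intro x.
  specialize (Hlb x).
  destruct (f x) as [r2 | |]; simpl in *; auto; lra.
Qed.

Lemma in_co_mem (X : HilbertSpace) (S : R * (X -> R) -> Prop) (p : R * (X -> R)) :
  S p -> in_co S p.
Proof.
  intro Hp; exists [(1, p)]; simpl.
  split; [| split; [lra | split; [lra | intro x; lra]]].
  intros w q [Heq | []]; inversion Heq; subst; split; [lra | exact Hp].
Qed.

Lemma ZS_of_zero_in_eps_subdiff (X : HilbertSpace) (f g : X -> Rbar)
    (eps : R) (x1 x2 : X) :
  in_eps_subdiff eps f x1 (0, fun _ => 0) -> ZS f g eps x1 x2.
Proof. intro H0; apply in_co_mem; left; exact H0. Qed.

Theorem mainTheorem15 (X Y : HilbertSpace) (a : X -> Y -> Rbar)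
  (Ha_ninf : forall x y, a x y <> MInf)
  (Ha_proper : forall y, proper (fun x => a x y))
  (Ha_conv : forall y, Phi_lsc_convex (fun x => a x y))
  (Ha_conc : forall x, concave (fun y => a x y))
  (Hminimax : exists s : Rbar,
      is_sup (fun t => exists y, is_inf (fun u => exists x, u = a x y) t) s /\
      is_inf (fun t => exists x, is_sup (fun u => exists y, u = a x y) t) s) :
  forall (alpha : R) (m : Rbar),
    is_inf (fun t => exists x, is_sup (fun u => exists y, u = a x y) t) m ->
    Rbar_lt (Fin alpha) m ->
    exists y1 y2 : Y, forall eps, 0 < eps ->
      exists x1 x2 : X, in_dom (fun x => a x y1) x1 /\ in_dom (fun x => a x y2) x2 /\
        ZS (fun x => a x y1) (fun x => a x y2) eps x1 x2.
Proof.
  intros alpha m Hm Halpha.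
  destruct Hminimax as [s [Hsup_inf Hinf_sup]].
  rewrite <- (is_inf_unique _ _ _ Hinf_sup Hm) in Halpha.
  destruct (is_sup_gt_elem _ _ _ Hsup_inf Halpha) as [t [[y Hinf_y] Ht_gt]].
  destruct (Ha_proper y) as [_ [x0 [r0 Hx0]]].
  destruct (is_inf_fin _ _ _ _ _ _ Hinf_y Hx0 Ht_gt)
    as [r ->].
  exists y, y; intros eps Heps.
  destruct (is_inf_approx _ _ (fun x => Ha_ninf x y) _ _ Hinf_y Heps)
    as [x1 [r1 [Hx1 Hr1]]].
  exists x1, x1.
  split; [exists r1; exact Hx1 |]. split; [exists r1; exact Hx1 |].
  apply ZS_of_zero_in_eps_subdiff, zero_in_eps_subdiff with (r := r) (r1 := r1);
    [| exact Hx1 | lra].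
  intro x; exact (proj1 Hinf_y (a x y) (ex_intro _ x eq_refl)).
Qed.
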